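(* Let $(a:b:c)\in\mathbb{P}^2$ with $(a:b:c)\notin\{(1:\pm1:\pm1)\}\cup\{(1:0:0),(0:1:0),(0:0:1)\}$, and let $X=X_{(a:b:c)}$. If $(a^2-b^2)(a^2-c^2)(b^2-c^2)\neq0$ (equivalently, the blow-up $\widetilde X$ of $X$ along $C_1\cup C_2$ is smooth), then $F_1\cap F_2$ is the only $G$-invariant irreducible curve in $X$. If $(a^2-b^2)(a^2-c^2)(b^2-c^2)=0$ (so $\widetilde X$ is singular), then $X$ contains no $G$-invariant irreducible curves.
   Context: $\mathbb{P}(1,1,2)\times\mathbb{P}(1,1,2)$ has weighted coordinates $(s_1:t_1:w_1)$, $(s_2:t_2:w_2)$ ($s_i,t_i$ of weight 1, $w_i$ of weight 2). Put $q=as_1t_1s_2t_2+\tfrac{b+c}{4}(s_1^2s_2^2+t_1^2t_2^2)+\tfrac{b-c}{4}(s_1^2t_2^2+t_1^2s_2^2)$ and $X_{(a:b:c)}=\{w_1w_2=q\}$; $C_1=\{s_1=t_1=w_2=0\}$, $C_2=\{s_2=t_2=w_1=0\}$; $F_1=\{q=w_1=0\}$, $F_2=\{q=w_2=0\}$ (surfaces in $X$). $G\cong\mathbb{C}^*\rtimes(\mathbb{Z}/2\mathbb{Z})^3$ is the group of automorphisms of $X$ generated by $\tau_1:((s_1:t_1:w_1),(s_2:t_2:w_2))\mapsto((s_2:t_2:w_1),(s_1:t_1:w_2))$, $\tau_2:\mapsto((t_1:s_1:w_1),(t_2:s_2:w_2))$, $\tau_3:\mapsto((s_1:-t_1:w_1),(s_2:-t_2:w_2))$,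 and $\sigma_\lambda:\mapsto((s_1:t_1:\lambda w_1),(s_2:t_2:\lambda^{-1}w_2))$ for $\lambda\in\mathbb{C}^*$. *)

From mathcomp Require Import all_boot all_algebra.
From mathcomp Require Import Rstruct complex.
From mathcomp Require mpoly.
From Stdlib Require Import Reals.
Set Implicit Arguments. Unset Strict Implicit. Unset Printing Implicit Defensive.
Import GRing.Theory.
Local Open Scope ring_scope.

Notation C := (complex.complex Rdefinitions.R).

Definition pt := 'I_6 -> C.

Definition mk6 (x0 x1 x2 x3 x4 x5 : C) : pt :=
  fun i => nth 0 [:: x0; x1; x2; x3; x4; x5] (nat_of_ord i).

Definition s1 (v : pt) : C := v (@Ordinal 6 0 isT).
Definition t1 (v : pt) : C := v (@Ordinal 6 1 isT).
Definition w1 (v : pt) : C := v (@Ordinal 6 2 isT).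
Definition s2 (v : pt) : C := v (@Ordinal 6 3 isT).
Definition t2 (v : pt) : C := v (@Ordinal 6 4 isT).
Definition w2 (v : pt) : C := v (@Ordinal 6 5 isT).

(* U = (C^3 minus 0) x (C^3 minus 0); P(1,1,2) x P(1,1,2) = U modulo the torus Gm x Gm. *)
Definition inU (v : pt) : Prop :=
  ~ (s1 v = 0 /\ t1 v = 0 /\ w1 v = 0) /\ ~ (s2 v = 0 /\ t2 v = 0 /\ w2 v = 0).

Definition tact (m1 m2 : C) (v : pt) : pt :=
  mk6 (m1 * s1 v) (m1 * t1 v) (m1 ^+ 2 * w1 v)
      (m2 * s2 v) (m2 * t2 v) (m2 ^+ 2 * w2 v).

Definition same_point (u v : pt) : Prop :=
  exists m1 m2 : C, m1 != 0 /\ m2 != 0 /\ v = tact m1 m2 u.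

(* A subset of P(1,1,2) x P(1,1,2) is represented by its (torus-invariant)
   preimage in U. *)
Definition subsetP (Z Z' : pt -> Prop) : Prop := forall v, Z v -> Z' v.

Definition wclosed (Z : pt -> Prop) : Prop :=
  (forall v, Z v -> inU v) /\
  (forall v m1 m2, m1 != 0 -> m2 != 0 -> Z v -> Z (tact m1 m2 v)) /\
  exists S : mpoly.mpoly 6 C -> Prop,
    forall v, Z v <-> (inU v /\ forall p, S p -> mpoly.meval v p = 0).

Definition finite_points (Z : pt -> Prop) : Prop :=
  exists l : list pt, forall v, Z v -> exists u, List.In u l /\ same_point u v.

Definition irreducible_closed (Z : pt -> Prop) : Prop :=
  wclosed Z /\ (exists v, Z v) /\
  forall Z1 Z2, wclosed Z1 -> wclosed Z2 ->
    (forall v, Z v <-> (Z1 v \/ Z2 v)) -> subsetP Z Z1 \/ subsetP Z Z2.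

(* irreducible curve = irreducible closed subset of dimension 1: infinitely
   many points, and every proper closed subset is finite. *)
Definition irreducible_curve (Z : pt -> Prop) : Prop :=
  irreducible_closed Z /\ ~ finite_points Z /\
  forall Z', wclosed Z' -> subsetP Z' Z -> ~ subsetP Z Z' -> finite_points Z'.

Definition qf (a b c : C) (v : pt) : C :=
  a * s1 v * t1 v * s2 v * t2 v
  + (b + c) / 4%:R * (s1 v ^+ 2 * s2 v ^+ 2 + t1 v ^+ 2 * t2 v ^+ 2)
  + (b - c) / 4%:R * (s1 v ^+ 2 * t2 v ^+ 2 + t1 v ^+ 2 * s2 v ^+ 2).

Definition Xabc (a b c : C) (v : pt) : Prop :=
  inU v /\ w1 v * w2 v = qf a b c v.

(* F1 cap F2 = { q = w1 = 0 } cap { q = w2 = 0 } *)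
Definition F1capF2 (a b c : C) (v : pt) : Prop :=
  inU v /\ qf a b c v = 0 /\ w1 v = 0 /\ w2 v = 0.

Definition tau1 (v : pt) : pt := mk6 (s2 v) (t2 v) (w1 v) (s1 v) (t1 v) (w2 v).
Definition tau2 (v : pt) : pt := mk6 (t1 v) (s1 v) (w1 v) (t2 v) (s2 v) (w2 v).
Definition tau3 (v : pt) : pt := mk6 (s1 v) (- t1 v) (w1 v) (s2 v) (- t2 v) (w2 v).
Definition sigma (l : C) (v : pt) : pt :=
  mk6 (s1 v) (t1 v) (l * w1 v) (s2 v) (t2 v) (l^-1 * w2 v).

(* G-invariance of a subset (G is generated by these automorphisms) *)
Definition G_invariant (Z : pt -> Prop) : Prop :=
  (forall v, Z (tau1 v) <-> Z v) /\
  (forall v, Z (tau2 v) <-> Z v) /\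
  (forall v, Z (tau3 v) <-> Z v) /\
  (forall l v, l != 0 -> (Z (sigma l v) <-> Z v)).

Definition G_inv_curve_in_X (a b c : C) (Z : pt -> Prop) : Prop :=
  irreducible_curve Z /\ subsetP Z (Xabc a b c) /\ G_invariant Z.

From Pilot Require Import Defs.
From mathcomp Require Import all_boot all_algebra.
From mathcomp Require Import Rstruct complex.
From mathcomp Require Import mpoly.
From mathcomp Require Import ring.
From Stdlib Require Import Classical FunctionalExtensionality PropExtensionality.
Import GRing.Theory Num.Theory.
Local Open Scope ring_scope.
Set Implicit Arguments. Unset Strict Implicit. Unset Printing Implicit Defensive.

(* A G-invariant irreducible curve Z in X lies in F1 cap F2 = {w1 = w2 = q = 0}:
   a point of Z with (w1, w2) <> 0 has an infinite sigma-orbit, contained in the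
   closed subset of Z where the ratios (s1 : t1) and (s2 : t2) are those of the
   point; tau2 and tau3 have no common fixed ratio, so this subset is proper,
   hence finite, a contradiction.

   Smooth case.  F1 cap F2 is the (2,2)-curve q = 0 in P^1 x P^1.  Viewed as a
   quadratic in s2 over C[s1], its discriminant has a simple root, so the norm
   form of the quadratic extension only vanishes at 0; by Euclidean division
   every polynomial vanishing at infinitely many points of the curve is a
   multiple of q.  Hence the curve is irreducible and contains every infinite
   closed subset of itself, and it is clearly G-invariant.

   Singular case.  Then q = be P^2 + ga Q^2 for bilinear forms P, Q and a
   generator (tau3 or tau2) fixing P and negating Q.  An irreducible Z inside
   q = 0 lies in one of the branches sqrt(be) P = +- sqrt(-ga) Q, which the
   generator exchanges, so Z lies in P = Q = 0: at most 36 points. *)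

Section FieldFacts.
Variable F : fieldType.

Lemma cross_eq0_proportional (s t x y : F) :
  ~ (s = 0 /\ t = 0) -> ~ (x = 0 /\ y = 0) -> s * y = t * x ->
  exists m, m != 0 /\ s = m * x /\ t = m * y.
Proof.
move=> hst hxy e.
have [x0|x0] := eqVneq x 0.
  have y0 : y != 0 by apply/eqP => y0; apply: hxy.
  have s0 : s = 0 by apply/eqP; move: e; rewrite x0 mulr0 => /eqP; rewrite mulf_eq0 (negbTE y0) orbF.
  exists (t / y); split; last by rewrite x0 s0 mulr0 divfK.
  by rewrite mulf_neq0 ?invr_eq0 //; apply/eqP => t0; apply: hst.
exists (s / x); split.
  rewrite mulf_neq0 ?invr_eq0 //; apply/eqP => s0; apply: hst; split=> //.
  by apply/eqP; move: e; rewrite s0 mul0r => /eqP; rewrite eq_sym mulf_eq0 (negbTE x0) orbF.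
by rewrite divfK // mulrAC e mulfK.
Qed.

Lemma scale_uniq (x y x' y' m n : F) : ~ (x = 0 /\ y = 0) ->
  x = m * x' -> y = m * y' -> x = n * x' -> y = n * y' -> m = n.
Proof.
move=> hxy e1 e2 e3 e4.
have [x0|x0] := eqVneq x 0.
  have y0 : y != 0 by apply/eqP => y0; apply: hxy.
  have y'0 : y' != 0 by apply: contraNneq y0 => h; rewrite e2 h mulr0.
  by apply: (mulIf y'0); rewrite -e2 -e4.
have x'0 : x' != 0 by apply: contraNneq x0 => h; rewrite e1 h mulr0.
by apply: (mulIf x'0); rewrite -e1 -e3.
Qed.

End FieldFacts.

Lemma cross_eq_of_kernel (R : idomainType) (a b c d x y : R) : ~ (x = 0 /\ y = 0) ->
  a * x + b * y = 0 -> c * x + d * y = 0 -> a * d = b * c.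
Proof.
move=> hxy e1 e2; apply/eqP; rewrite -subr_eq0; apply: contraT => hdet; exfalso; apply: hxy.
have ex : (a * d - b * c) * x = d * (a * x + b * y) - b * (c * x + d * y) by ring.
have ey : (a * d - b * c) * y = a * (c * x + d * y) - c * (a * x + b * y) by ring.
rewrite e1 e2 !mulr0 subr0 in ex ey.
by split; apply/eqP; [move/eqP: ex | move/eqP: ey]; rewrite mulf_eq0 (negbTE hdet).
Qed.

Lemma exists_natr_notin (R : numDomainType) (s : seq R) : exists k : nat, k.+1%:R \notin s.
Proof.
apply: NNPP => nH.
have sub : {subset [seq k.+1%:R | k <- iota 0 (size s).+1] <= s}.
  by move=> _ /mapP [k _ ->]; apply/negPn/negP => hk; apply: nH; exists k.
have U : uniq ([seq k.+1%:R | k <- iota 0 (size s).+1] : seq R).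
  by rewrite map_inj_uniq ?iota_uniq // => i j /eqP; rewrite eqr_nat eqSS => /eqP.
by have := uniq_leq_size U sub; rewrite size_map size_iota ltnn.
Qed.

Lemma In_map_mem (T : eqType) (U : Type) (f : T -> U) (s : seq T) z :
  z \in s -> List.In (f z) (map f s).
Proof.
elim: s => [|x s ih] //=; rewrite inE => /orP [/eqP ->|h]; first by left.
by right; apply: ih.
Qed.

Lemma mem_map_In (T : Type) (U : eqType) (f : T -> U) (l : list T) u :
  List.In u l -> f u \in map f l.
Proof.
elim: l => [[]|x l ih] /= [->|h]; rewrite inE; first by rewrite eqxx.
by rewrite ih ?orbT.
Qed.

Section Roots.
Variable F : decFieldType.

Definition roots_seq (P : {poly F}) : seq F := projT1 (dec_factor_theorem P).

Lemma roots_seqP P z : P != 0 -> root P z -> z \in roots_seq P.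
Proof.
rewrite /roots_seq; case: (dec_factor_theorem P) => s [q [eP hq]] /=.
rewrite eP mulf_eq0 negb_or => /andP [q0 _].
by rewrite rootM (negbTE (hq q0 z)) root_prod_XsubC.
Qed.

(* Representatives [(s, t)] of the zeros in P^1 of [al s^2 + be s t + ga t^2]. *)
Definition quad_zeros (al be ga : F) : list (F * F) :=
  (1, 0) :: map (fun z => (z, 1)) (roots_seq (al%:P * 'X^2 + be%:P * 'X + ga%:P)).

Lemma quad_zeros_neq0 al be ga p : List.In p (quad_zeros al be ga) -> ~ (p.1 = 0 /\ p.2 = 0).
Proof.
rewrite /quad_zeros /= => -[<- /= [/eqP]|]; first by rewrite oner_eq0.
elim: (roots_seq _) => [|x s ih] //= [<- /= [_ /eqP]|]; first by rewrite oner_eq0.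
exact: ih.
Qed.

Lemma quad_zerosP al be ga s t : ~ (al = 0 /\ be = 0 /\ ga = 0) -> ~ (s = 0 /\ t = 0) ->
  al * s ^+ 2 + be * s * t + ga * t ^+ 2 = 0 ->
  exists2 p, List.In p (quad_zeros al be ga) & s * p.2 = t * p.1.
Proof.
move=> habg hst e.
have [t0|t0] := eqVneq t 0.
  by exists (1, 0); [left | rewrite t0 /= mulr0 mul0r].
exists (s / t, 1); last by rewrite /= mulr1 mulrC divfK.
right; apply: In_map_mem; apply: roots_seqP.
  apply/eqP => /polyP h; apply: habg.
  have := h 0%N; have := h 1%N; have := h 2%N.
  rewrite !coefE /= => h2 h1 h0.
  by move: h0 h1 h2; rewrite !mulr0 !mulr1 !add0r !addr0 => -> -> ->.
apply/rootP; rewrite !(hornerD, hornerCM, hornerXn, hornerC, hornerX).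
apply: (mulIf (expf_neq0 2 t0)); rewrite mul0r -e; field.
by rewrite t0.
Qed.

End Roots.

Section Eval2.
Variable R : comNzRingType.

(* [g : {poly {poly R}}] as a polynomial in two variables: [x] is the inner
   variable and [y] the outer one. *)
Definition eval2 (g : {poly {poly R}}) (x y : R) : R := (map_poly (horner_eval x) g).[y].

Lemma eval2D g h x y : eval2 (g + h) x y = eval2 g x y + eval2 h x y.
Proof. by rewrite /eval2 rmorphD hornerD. Qed.
Lemma eval2M g h x y : eval2 (g * h) x y = eval2 g x y * eval2 h x y.
Proof. by rewrite /eval2 rmorphM hornerM. Qed.
Lemma eval2XN g n x y : eval2 (g ^+ n) x y = eval2 g x y ^+ n.
Proof. by rewrite /eval2 rmorphXn horner_exp. Qed.
Lemma eval2C c x y : eval2 c%:P x y = c.[x].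
Proof. by rewrite /eval2 map_polyC hornerC. Qed.
Lemma eval2X x y : eval2 'X x y = y.
Proof. by rewrite /eval2 map_polyX hornerX. Qed.

Definition is_poly2 (f : R -> R -> R) := exists g, forall x y, f x y = eval2 g x y.

Lemma is_poly2_ext f f' : (forall x y, f x y = f' x y) -> is_poly2 f -> is_poly2 f'.
Proof. by move=> e [g hg]; exists g => x y; rewrite -e. Qed.
Lemma is_poly2_cst c : is_poly2 (fun _ _ => c).
Proof. by exists c%:P%:P => x y; rewrite eval2C hornerC. Qed.
Lemma is_poly2_x : is_poly2 (fun x _ => x).
Proof. by exists 'X%:P => x y; rewrite eval2C hornerX. Qed.
Lemma is_poly2_y : is_poly2 (fun _ y => y).
Proof. by exists 'X => x y; rewrite eval2X. Qed.
Lemma is_poly2D f h : is_poly2 f -> is_poly2 h -> is_poly2 (fun x y => f x y + h x y).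
Proof. by move=> [g hg] [k hk]; exists (g + k) => x y; rewrite eval2D hg hk. Qed.
Lemma is_poly2M f h : is_poly2 f -> is_poly2 h -> is_poly2 (fun x y => f x y * h x y).
Proof. by move=> [g hg] [k hk]; exists (g * k) => x y; rewrite eval2M hg hk. Qed.
Lemma is_poly2XN f n : is_poly2 f -> is_poly2 (fun x y => f x y ^+ n).
Proof. by move=> [g hg]; exists (g ^+ n) => x y; rewrite eval2XN hg. Qed.

Lemma is_poly2_sum (I : Type) (r : seq I) (P : pred I) (F : I -> R -> R -> R) :
  (forall i, is_poly2 (F i)) -> is_poly2 (fun x y => \sum_(i <- r | P i) F i x y).
Proof.
move=> hF; elim: r => [|i r ih].
  by apply: is_poly2_ext (is_poly2_cst 0) => x y; rewrite big_nil.
case Pi: (P i); last by apply: is_poly2_ext ih => x y; rewrite big_cons Pi.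
by apply: is_poly2_ext (is_poly2D (hF i) ih) => x y; rewrite big_cons Pi.
Qed.

Lemma is_poly2_prod (I : Type) (r : seq I) (P : pred I) (F : I -> R -> R -> R) :
  (forall i, is_poly2 (F i)) -> is_poly2 (fun x y => \prod_(i <- r | P i) F i x y).
Proof.
move=> hF; elim: r => [|i r ih].
  by apply: is_poly2_ext (is_poly2_cst 1) => x y; rewrite big_nil.
case Pi: (P i); last by apply: is_poly2_ext ih => x y; rewrite big_cons Pi.
by apply: is_poly2_ext (is_poly2M (hF i) ih) => x y; rewrite big_cons Pi.
Qed.

End Eval2.

(* If [D] has a simple root then [D] is not a square in the fraction field. *)
Lemma sqr_eq_mul_sqr_simple_root (R : idomainType) (D : {poly R}) z0 :
  D.[z0] = 0 -> (D^`()).[z0] != 0 ->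
  forall S r : {poly R}, S ^+ 2 = D * r ^+ 2 -> r = 0.
Proof.
move=> hD hD' S r; have [n] := ubnP (size r); elim: n S r => // n IH S r hn e.
have [->|r0] := eqVneq r 0; first by [].
have Sz : S.[z0] = 0 by apply/eqP; rewrite -sqrf_eq0 -horner_exp e hornerM hD mul0r.
have rz : r.[z0] = 0.
  have := congr1 (fun p => p^`().[z0]) e => /=.
  rewrite !expr2 !derivM !hornerE Sz hD !(mulr0, mul0r, addr0, add0r) => /esym/eqP.
  by rewrite !mulf_eq0 (negbTE hD') /= orbb => /eqP.
have /factor_theorem [S1 eS] : root S z0 by apply/rootP.
have /factor_theorem [r1 er] : root r z0 by apply/rootP.
have l0 : ('X - z0%:P) ^+ 2 != 0 :> {poly R} by rewrite expf_neq0 // polyXsubC_eq0.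
have e1 : S1 ^+ 2 = D * r1 ^+ 2.
  by apply: (mulIf l0); move: e; rewrite eS er !exprMn => ->; ring.
have r10 : r1 != 0 by apply: contraNneq r0 => h; rewrite er h mul0r.
suff r1_0 : r1 = 0 by rewrite er r1_0 mul0r.
by apply: IH e1; move: hn; rewrite er size_Mmonic ?monicXsubC // size_XsubC addn2.
Qed.

Lemma cancel_scale_XsubC (R : idomainType) (Q H quo : {poly {poly R}}) z :
  map_poly (horner_eval z) Q != 0 -> ('X - z%:P) *: H = quo * Q ->
  exists quo', H = quo' * Q.
Proof.
set l : {poly R} := 'X - z%:P => hQ e.
have quo_z : map_poly (horner_eval z) quo = 0.
  have := congr1 (map_poly (horner_eval z)) e.
  rewrite -mul_polyC !rmorphM /= map_polyC /= horner_evalE /l hornerXsubC subrr.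
  by rewrite mul0r => /esym/eqP; rewrite mulf_eq0 (negbTE hQ) orbF => /eqP.
have l_quo i : l %| quo`_i.
  rewrite dvdp_XsubCl; apply/rootP.
  by have := congr1 (fun p : {poly R} => p`_i) quo_z; rewrite /= coef_map coef0.
have ul : lead_coef l \in GRing.unit by rewrite lead_coefXsubC unitr1.
set quo' := map_poly (fun p => p %/ l) quo.
have equo : quo = quo' * l%:P.
  apply/polyP => i; rewrite coefMC coef_map_id0 ?div0p //.
  by rewrite (Pdiv.IdomainUnit.divpK ul).
exists quo'; apply: (@mulfI _ l%:P); first by rewrite polyC_eq0 polyXsubC_eq0.
by rewrite mul_polyC e equo; ring.
Qed.

Lemma cancel_scale (R : closedFieldType) (Q : {poly {poly R}}) (c0 : {poly R})
    (H quo : {poly {poly R}}) :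
  c0 != 0 -> (forall z, root c0 z -> map_poly (horner_eval z) Q != 0) ->
  c0 *: H = quo * Q -> exists quo', H = quo' * Q.
Proof.
have [n] := ubnP (size c0); elim: n c0 H quo => // n IH c0 H quo hn c00 hr e.
have [s1|s1] := eqVneq (size c0) 1.
  have [k ek] : exists k, c0 = k%:P by exists c0`_0; apply: size1_polyC; rewrite s1.
  have k0 : k != 0 by move: c00; rewrite ek polyC_eq0.
  exists ((k^-1)%:P *: quo); rewrite -scalerAl -e scalerA ek.
  by rewrite -rmorphM /= mulVf // scale1r.
have [z rz] : exists z, root c0 z by apply/closed_rootP.
have /factor_theorem [c1 ec] := rz.
have c10 : c1 != 0 by apply: contraNneq c00 => h; rewrite ec h mul0r.
have e' : ('X - z%:P) *: (c1 *: H) = quo * Q by rewrite scalerA mulrC -ec.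
have [quo1 e1] := cancel_scale_XsubC (hr z rz) e'.
apply: (IH c1 H quo1) => //; last by move=> y ry; apply: hr; rewrite ec rootM ry.
by move: hn; rewrite ec size_Mmonic ?monicXsubC // size_XsubC addn2.
Qed.

(** * Points, the torus action and closed sets *)

Lemma mk6E0 x0 x1 x2 x3 x4 x5 : s1 (mk6 x0 x1 x2 x3 x4 x5) = x0. Proof. by []. Qed.
Lemma mk6E1 x0 x1 x2 x3 x4 x5 : t1 (mk6 x0 x1 x2 x3 x4 x5) = x1. Proof. by []. Qed.
Lemma mk6E2 x0 x1 x2 x3 x4 x5 : w1 (mk6 x0 x1 x2 x3 x4 x5) = x2. Proof. by []. Qed.
Lemma mk6E3 x0 x1 x2 x3 x4 x5 : s2 (mk6 x0 x1 x2 x3 x4 x5) = x3. Proof. by []. Qed.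
Lemma mk6E4 x0 x1 x2 x3 x4 x5 : t2 (mk6 x0 x1 x2 x3 x4 x5) = x4. Proof. by []. Qed.
Lemma mk6E5 x0 x1 x2 x3 x4 x5 : w2 (mk6 x0 x1 x2 x3 x4 x5) = x5. Proof. by []. Qed.
Definition mk6E := (mk6E0, mk6E1, mk6E2, mk6E3, mk6E4, mk6E5).

Lemma pt_ext (u v : pt) : s1 u = s1 v -> t1 u = t1 v -> w1 u = w1 v ->
  s2 u = s2 v -> t2 u = t2 v -> w2 u = w2 v -> u = v.
Proof.
rewrite /s1 /t1 /w1 /s2 /t2 /w2 => h0 h1 h2 h3 h4 h5.
apply: functional_extensionality => -[i hi].
case: i hi => [|[|[|[|[|[|i]]]]]] hi //;
  [ move: h0 | move: h1 | move: h2 | move: h3 | move: h4 | move: h5 ];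
  by rewrite (bool_irrelevance hi isT).
Qed.

Lemma tactE m1 m2 v :
  (s1 (tact m1 m2 v) = m1 * s1 v) * (t1 (tact m1 m2 v) = m1 * t1 v) *
  (w1 (tact m1 m2 v) = m1 ^+ 2 * w1 v) * (s2 (tact m1 m2 v) = m2 * s2 v) *
  (t2 (tact m1 m2 v) = m2 * t2 v) * (w2 (tact m1 m2 v) = m2 ^+ 2 * w2 v).
Proof. by []. Qed.

Lemma tact_tact m1 m2 n1 n2 v : tact m1 m2 (tact n1 n2 v) = tact (m1 * n1) (m2 * n2) v.
Proof. by apply: pt_ext; rewrite !tactE; ring. Qed.

Lemma qf_tact a b c m1 m2 v : qf a b c (tact m1 m2 v) = m1 ^+ 2 * m2 ^+ 2 * qf a b c v.
Proof. by rewrite /qf !tactE; ring. Qed.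

Lemma inU_tact m1 m2 v : m1 != 0 -> m2 != 0 -> inU (tact m1 m2 v) <-> inU v.
Proof.
move=> h1 h2; rewrite /inU !tactE.
have mulIf0 (m x : C) : m != 0 -> m * x = 0 -> x = 0.
  by move=> hm /eqP; rewrite mulf_eq0 (negbTE hm) => /eqP.
have h1' : m1 ^+ 2 != 0 by rewrite expf_neq0.
have h2' : m2 ^+ 2 != 0 by rewrite expf_neq0.
split=> -[g1 g2]; split.
- by move=> [x [y z]]; apply: g1; rewrite x y z !mulr0.
- by move=> [x [y z]]; apply: g2; rewrite x y z !mulr0.
- by move=> [x [y z]]; apply: g1; rewrite (mulIf0 _ _ h1 x) (mulIf0 _ _ h1 y) (mulIf0 _ _ h1' z).
- by move=> [x [y z]]; apply: g2; rewrite (mulIf0 _ _ h2 x) (mulIf0 _ _ h2 y) (mulIf0 _ _ h2' z).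
Qed.

Lemma inU_ratios v : inU v -> w1 v = 0 -> w2 v = 0 ->
  ~ (s1 v = 0 /\ t1 v = 0) /\ ~ (s2 v = 0 /\ t2 v = 0).
Proof. by move=> [h1 h2] e1 e2; split=> -[x y]; [apply: h1 | apply: h2]. Qed.

Definition is_polyfun (f : pt -> C) := forall e : C -> C -> pt,
  (forall i, is_poly2 (fun x y => e x y i)) -> is_poly2 (fun x y => f (e x y)).

Lemma is_polyfun_meval (p : {mpoly C[6]}) : is_polyfun (fun v => mpoly.meval v p).
Proof.
move=> e he; apply: is_poly2_ext; first by move=> x y; rewrite mevalE.
apply: is_poly2_sum => m; apply: is_poly2M; first exact: is_poly2_cst.
by apply: is_poly2_prod => i; apply: is_poly2XN.
Qed.

Lemma is_poly2_mk6 (f0 f1 f2 f3 f4 f5 : C -> C -> C) :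
  is_poly2 f0 -> is_poly2 f1 -> is_poly2 f2 -> is_poly2 f3 -> is_poly2 f4 -> is_poly2 f5 ->
  forall i, is_poly2 (fun x y => mk6 (f0 x y) (f1 x y) (f2 x y) (f3 x y) (f4 x y) (f5 x y) i).
Proof. by move=> h0 h1 h2 h3 h4 h5 [[|[|[|[|[|[|i]]]]]] hi]. Qed.

(* Unlike [wclosed], this class is stable under the coordinate swaps below
   without any bookkeeping on multivariate polynomials. *)
Definition pclosed (Z : pt -> Prop) : Prop :=
  (forall v m1 m2, m1 != 0 -> m2 != 0 -> Z v -> Z (tact m1 m2 v)) /\
  exists S : (pt -> C) -> Prop, (forall f, S f -> is_polyfun f) /\
    forall v, Z v <-> (inU v /\ forall f, S f -> f v = 0).

Lemma wclosed_pclosed Z : wclosed Z -> pclosed Z.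
Proof.
move=> [_ [ht [S hS]]]; split=> //.
exists (fun f => exists2 p, S p & f = fun v => mpoly.meval v p); split.
  by move=> f [p _ ->]; apply: is_polyfun_meval.
move=> v; rewrite hS; split=> -[hu h]; split=> //.
  by move=> f [p Sp ->]; apply: h.
by move=> p Sp; apply: (h (fun v => mpoly.meval v p)); exists p.
Qed.

Lemma wclosed_setI_zero Z (p : {mpoly C[6]}) : wclosed Z ->
  (forall u m1 m2, exists k, mpoly.meval (tact m1 m2 u) p = k * mpoly.meval u p) ->
  wclosed (fun u => Z u /\ mpoly.meval u p = 0).
Proof.
move=> [hZU [ht [S hS]]] hp; split; first by move=> u [/hZU].
split.
  move=> u m1 m2 h1 h2 [Zu eu]; split; first exact: ht.
  by have [k ->] := hp u m1 m2; rewrite eu mulr0.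
exists (fun q => S q \/ q = p) => u; split.
  by move=> [/hS [hu hq] eu]; split=> // q [/hq //|->].
move=> [hu hq]; split; last by apply: hq; right.
by apply/hS; split=> // q Sq; apply: hq; left.
Qed.

Lemma finite_points_union (Z Z1 Z2 : pt -> Prop) : (forall v, Z v -> Z1 v \/ Z2 v) ->
  finite_points Z1 -> finite_points Z2 -> finite_points Z.
Proof.
move=> h [l1 h1] [l2 h2]; exists (List.app l1 l2) => v /h [/h1|/h2] [u [iu su]];
  exists u; split=> //; apply: List.in_or_app; [left|right]; exact: iu.
Qed.

(* Points with [w1 = w2 = 0] are determined, up to the torus, by the two
   ratios [(s1 : t1)] and [(s2 : t2)]. *)
Lemma finite_points_of_ratios Z (L1 : list (C * C)) (L2 : C * C -> list (C * C)) :
  (forall p, List.In p L1 -> ~ (p.1 = 0 /\ p.2 = 0)) ->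
  (forall p1 p, List.In p (L2 p1) -> ~ (p.1 = 0 /\ p.2 = 0)) ->
  (forall v, Z v -> [/\ inU v, w1 v = 0, w2 v = 0 &
     exists2 p1, List.In p1 L1 /\ s1 v * p1.2 = t1 v * p1.1 &
     exists2 p2, List.In p2 (L2 p1) & s2 v * p2.2 = t2 v * p2.1]) ->
  finite_points Z.
Proof.
move=> h1 h2 hZ.
exists (List.flat_map (fun p1 => List.map (fun p2 => mk6 p1.1 p1.2 0 p2.1 p2.2 0) (L2 p1)) L1).
move=> v /hZ [hu e1 e2 [p1 [i1 f1] [p2 i2 f2]]].
have [st1 st2] := inU_ratios hu e1 e2.
have [m1 [m10 [g1 g1']]] := cross_eq0_proportional st1 (h1 p1 i1) f1.
have [m2 [m20 [g2 g2']]] := cross_eq0_proportional st2 (h2 p1 p2 i2) f2.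
exists (mk6 p1.1 p1.2 0 p2.1 p2.2 0); split.
  by apply/List.in_flat_map; exists p1; split=> //; apply: List.in_map.
exists m1, m2; split=> //; split=> //.
by apply: pt_ext; rewrite !tactE !mk6E ?mulr0.
Qed.

Section Swap.
Variable sw : pt -> pt.
Hypothesis sw_poly : forall e : C -> C -> pt, (forall i, is_poly2 (fun x y => e x y i)) ->
  forall i, is_poly2 (fun x y => sw (e x y) i).
Hypothesis inU_sw : forall v, inU (sw v) <-> inU v.
Hypothesis sw_tact : forall v m1 m2, sw (tact m1 m2 v) = tact m1 m2 (sw v).
Hypothesis swK : involutive sw.

Lemma pclosed_sw Z : pclosed Z -> pclosed (fun v => Z (sw v)).
Proof.
move=> [ht [S [hp hS]]]; split.
  by move=> v m1 m2 h1 h2 Zv; rewrite sw_tact; apply: ht.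
exists (fun f => exists2 h, S h & f = fun v => h (sw v)); split.
  by move=> f [h Sh ->] e he; exact: (hp h Sh (fun x y => sw (e x y)) (sw_poly he)).
move=> v; rewrite hS inU_sw; split=> -[hu h]; split=> //.
  by move=> f [k Sk ->]; apply: h.
by move=> k Sk; apply: (h (fun v => k (sw v))); exists k.
Qed.

Lemma finite_points_sw Z : finite_points (fun v => Z (sw v)) -> finite_points Z.
Proof.
move=> [l hl]; exists (List.map sw l) => v Zv.
have [|u [ul [m1 [m2 [h1 [h2 e]]]]]] := hl (sw v); first by rewrite swK.
exists (sw u); split; first exact: List.in_map.
by exists m1, m2; split=> //; split=> //; rewrite -sw_tact -e swK.
Qed.

End Swap.

Definition swap_st1 (v : pt) : pt := mk6 (t1 v) (s1 v) (w1 v) (s2 v) (t2 v) (w2 v).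
Definition swap_st2 (v : pt) : pt := mk6 (s1 v) (t1 v) (w1 v) (t2 v) (s2 v) (w2 v).

Lemma swap_st1_poly (e : C -> C -> pt) : (forall i, is_poly2 (fun x y => e x y i)) ->
  forall i, is_poly2 (fun x y => swap_st1 (e x y) i).
Proof. by move=> he; apply: is_poly2_mk6; apply: he. Qed.
Lemma swap_st2_poly (e : C -> C -> pt) : (forall i, is_poly2 (fun x y => e x y i)) ->
  forall i, is_poly2 (fun x y => swap_st2 (e x y) i).
Proof. by move=> he; apply: is_poly2_mk6; apply: he. Qed.
Lemma inU_swap_st1 v : inU (swap_st1 v) <-> inU v.
Proof. by rewrite /inU /swap_st1 !mk6E; split=> -[h1 h2]; split=> // -[x [y z]]; apply: h1. Qed.
Lemma inU_swap_st2 v : inU (swap_st2 v) <-> inU v.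
Proof. by rewrite /inU /swap_st2 !mk6E; split=> -[h1 h2]; split=> // -[x [y z]]; apply: h2. Qed.
Lemma swap_st1_tact v m1 m2 : swap_st1 (tact m1 m2 v) = tact m1 m2 (swap_st1 v).
Proof. by apply: pt_ext. Qed.
Lemma swap_st2_tact v m1 m2 : swap_st2 (tact m1 m2 v) = tact m1 m2 (swap_st2 v).
Proof. by apply: pt_ext. Qed.
Lemma swap_st1K : involutive swap_st1.
Proof. by move=> v; apply: pt_ext. Qed.
Lemma swap_st2K : involutive swap_st2.
Proof. by move=> v; apply: pt_ext. Qed.

Lemma F1capF2_swap_st1 a b c u : F1capF2 a b c (swap_st1 u) <-> F1capF2 a b (- c) u.
Proof.
rewrite /F1capF2 inU_swap_st1 (_ : qf a b c (swap_st1 u) = qf a b (- c) u) //.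
by rewrite /qf /swap_st1 !mk6E; ring.
Qed.
Lemma F1capF2_swap_st2 a b c u : F1capF2 a b c (swap_st2 u) <-> F1capF2 a b (- c) u.
Proof.
rewrite /F1capF2 inU_swap_st2 (_ : qf a b c (swap_st2 u) = qf a b (- c) u) //.
by rewrite /qf /swap_st2 !mk6E; ring.
Qed.

Definition infinite_closed_sub (F Z : pt -> Prop) :=
  [/\ pclosed Z, forall v, Z v -> F v & ~ finite_points Z].

Lemma infinite_closed_sub_swap_st1 a b c Z :
  infinite_closed_sub (F1capF2 a b c) Z ->
  infinite_closed_sub (F1capF2 a b (- c)) (fun v => Z (swap_st1 v)).
Proof.
case=> wc hZ nf; split.
- exact: (pclosed_sw swap_st1_poly inU_swap_st1 swap_st1_tact).
- by move=> v /hZ /F1capF2_swap_st1.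
- by move/(finite_points_sw swap_st1_tact swap_st1K).
Qed.

Lemma infinite_closed_sub_swap_st2 a b c Z :
  infinite_closed_sub (F1capF2 a b c) Z ->
  infinite_closed_sub (F1capF2 a b (- c)) (fun v => Z (swap_st2 v)).
Proof.
case=> wc hZ nf; split.
- exact: (pclosed_sw swap_st2_poly inU_swap_st2 swap_st2_tact).
- by move=> v /hZ /F1capF2_swap_st2.
- by move/(finite_points_sw swap_st2_tact swap_st2K).
Qed.

(** * The curve F1 cap F2 in the smooth case *)

Lemma two_neq0 : (2 : C) != 0. Proof. by rewrite pnatr_eq0. Qed.
Lemma four_neq0 : (4 : C) != 0. Proof. by rewrite pnatr_eq0. Qed.

Definition smooth_params (a b c : C) :=
  [/\ b ^+ 2 - c ^+ 2 != 0, a ^+ 2 - b ^+ 2 != 0, a ^+ 2 - c ^+ 2 != 0,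
      ~ (a = 0 /\ b = 0) & ~ (a = 0 /\ c = 0)].

Lemma smooth_paramsN a b c : smooth_params a b c -> smooth_params a b (- c).
Proof.
case=> h1 h2 h3 h4 h5; split; rewrite ?sqrrN //.
by move=> [x y]; apply: h5; split=> //; apply/eqP; rewrite -oppr_eq0 y.
Qed.

Definition qA (b c x y : C) := (b + c) / 4 * x ^+ 2 + (b - c) / 4 * y ^+ 2.
Definition qD (b c x y : C) := (b + c) / 4 * y ^+ 2 + (b - c) / 4 * x ^+ 2.

Lemma qf_quadratic a b c v : qf a b c v =
  qA b c (s1 v) (t1 v) * s2 v ^+ 2 + a * s1 v * t1 v * s2 v * t2 v
  + qD b c (s1 v) (t1 v) * t2 v ^+ 2.
Proof. by rewrite /qf /qA /qD; ring. Qed.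

Section SmoothQuadric.
Variables a b c : C.
Hypothesis smooth : smooth_params a b c.

Lemma addr_params_neq0 : b + c != 0.
Proof. by case: smooth => h _ _ _ _; apply: contraNneq h => e; rewrite subr_sqr e mulr0. Qed.
Lemma subr_params_neq0 : b - c != 0.
Proof. by case: smooth => h _ _ _ _; apply: contraNneq h => e; rewrite subr_sqr e mul0r. Qed.

Lemma quarter_neq0 (x : C) : x != 0 -> x / 4 != 0.
Proof. by move=> x0; rewrite mulf_neq0 ?invr_eq0 ?four_neq0. Qed.

Lemma qforms_no_common_zero x y : ~ (x = 0 /\ y = 0) ->
  ~ (qA b c x y = 0 /\ a * x * y = 0 /\ qD b c x y = 0).
Proof.
move=> hxy [hA [hB hD]].
have hbc := quarter_neq0 addr_params_neq0; have hbc' := quarter_neq0 subr_params_neq0.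
have x0 : x != 0.
  apply/eqP => x0; apply: hxy; split=> //; apply/eqP; rewrite -sqrf_eq0.
  by move/eqP: hA; rewrite /qA x0 expr0n mulr0 add0r mulf_eq0 (negbTE hbc').
have y0 : y != 0.
  apply/eqP => y0; apply: hxy; split=> //; apply/eqP; rewrite -sqrf_eq0.
  by move/eqP: hA; rewrite /qA y0 expr0n mulr0 addr0 mulf_eq0 (negbTE hbc).
have a0 : a = 0.
  by apply/eqP; move/eqP: hB; rewrite !mulf_eq0 (negbTE x0) (negbTE y0) !orbF.
case: smooth => _ _ _ nab nac.
have b0 : b != 0 by apply/eqP => b0; apply: nab.
have c0 : c != 0 by apply/eqP => c0; apply: nac.
have e1 : b * (x ^+ 2 + y ^+ 2) = 0.
  rewrite (_ : b * _ = 2 * (qA b c x y + qD b c x y)); last by rewrite /qA /qD; field.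
  by rewrite hA hD addr0 mulr0.
have e2 : c * (x ^+ 2 - y ^+ 2) = 0.
  rewrite (_ : c * _ = 2 * (qA b c x y - qD b c x y)); last by rewrite /qA /qD; field.
  by rewrite hA hD subr0 mulr0.
move/eqP: e1; rewrite mulf_eq0 (negbTE b0) => /eqP e1.
move/eqP: e2; rewrite mulf_eq0 (negbTE c0) => /eqP e2.
have : x ^+ 2 * 2 = 0.
  have -> : x ^+ 2 * 2 = (x ^+ 2 + y ^+ 2) + (x ^+ 2 - y ^+ 2) by ring.
  by rewrite e1 e2 addr0.
by move/eqP; rewrite mulf_eq0 (negbTE two_neq0) orbF sqrf_eq0 (negbTE x0).
Qed.

(* The dehomogenisation of [q] at [t1 = t2 = 1], as a quadratic polynomial
   in [y = s2] over [{poly C}] (the variable [x = s1]). *)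
Definition qA_poly : {poly C} := ((b + c) / 4)%:P * 'X^2 + ((b - c) / 4)%:P.
Definition qB_poly : {poly C} := a%:P * 'X.
Definition qD_poly : {poly C} := ((b + c) / 4)%:P + ((b - c) / 4)%:P * 'X^2.
Definition q_poly2 : {poly {poly C}} := qA_poly%:P * 'X^2 + (qB_poly%:P * 'X + qD_poly%:P).

Lemma qA_polyE z : qA_poly.[z] = qA b c z 1.
Proof. by rewrite /qA_poly /qA !(hornerD, hornerCM, hornerXn, hornerC); ring. Qed.
Lemma qB_polyE z : qB_poly.[z] = a * z * 1.
Proof. by rewrite /qB_poly !(hornerD, hornerCM, hornerX, hornerC); ring. Qed.
Lemma qD_polyE z : qD_poly.[z] = qD b c z 1.
Proof. by rewrite /qD_poly /qD !(hornerD, hornerCM, hornerXn, hornerC); ring. Qed.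

Lemma eval2_q_poly2 z1 z2 :
  eval2 q_poly2 z1 z2 = qA_poly.[z1] * z2 ^+ 2 + qB_poly.[z1] * z2 + qD_poly.[z1].
Proof. by rewrite /q_poly2 !(eval2D, eval2M, eval2C, eval2XN, eval2X); ring. Qed.

Lemma qf_dehomog z1 z2 : qf a b c (mk6 z1 1 0 z2 1 0) = eval2 q_poly2 z1 z2.
Proof. by rewrite eval2_q_poly2 qA_polyE qB_polyE qD_polyE /qf !mk6E /qA /qD; ring. Qed.

Lemma qA_poly_neq0 : qA_poly != 0.
Proof.
apply: contraTneq (quarter_neq0 subr_params_neq0) => h.
have := congr1 (horner^~ 0) h; rewrite qA_polyE /qA horner0 /=.
by rewrite expr0n /= mulr0 add0r expr1n mulr1 => ->; rewrite eqxx.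
Qed.

Lemma size_q_poly2_top : size (qA_poly%:P * 'X^2 : {poly {poly C}}) = 3.
Proof. by rewrite mul_polyC size_scale ?size_polyXn ?qA_poly_neq0. Qed.

Lemma size_q_poly2_low : (size ((qB_poly%:P * 'X + qD_poly%:P)%R : {poly {poly C}}) < 3)%N.
Proof.
rewrite (leq_ltn_trans (size_polyD _ _)) // gtn_max.
rewrite (leq_ltn_trans (size_polyC_leq1 _)) // andbT.
by rewrite mul_polyC (leq_ltn_trans (size_scale_leq _ _)) // size_polyX.
Qed.

Lemma size_q_poly2 : size q_poly2 = 3.
Proof. by rewrite /q_poly2 size_polyDl size_q_poly2_top // size_q_poly2_low. Qed.

Lemma lead_coef_q_poly2 : lead_coef q_poly2 = qA_poly.
Proof.
rewrite /q_poly2 lead_coefDl; first by rewrite mul_polyC lead_coefZ lead_coefXn mulr1.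
by rewrite size_q_poly2_top size_q_poly2_low.
Qed.

Lemma q_poly2_neq0 : q_poly2 != 0.
Proof. by rewrite -size_poly_eq0 size_q_poly2. Qed.

Lemma q_poly2_fiber_neq0 z : root qA_poly z -> map_poly (horner_eval z) q_poly2 != 0.
Proof.
move/rootP => hz; apply/eqP => h.
have e y : eval2 q_poly2 z y = 0 by rewrite /eval2 h horner0.
have e0 := e 0; have e1 := e 1; rewrite !eval2_q_poly2 hz in e0 e1.
move: e0; rewrite expr0n /= !mulr0 !add0r => hD.
move: e1; rewrite hD !mulr1 mul0r add0r addr0 => hB.
apply: (@qforms_no_common_zero z 1); first by case=> _ /eqP; rewrite oner_eq0.
by rewrite -qA_polyE -qD_polyE -qB_polyE.
Qed.

Definition q_disc : {poly C} := qB_poly ^+ 2 - qA_poly * qD_poly *+ 4.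

Lemma q_discE z : q_disc.[z] = - ((b^+2 - c^+2) * z^+4
  + 2 * (b^+2 + c^+2 - 2 * a^+2) * z^+2 + (b^+2 - c^+2)) / 4.
Proof. by rewrite /q_disc /qA_poly /qB_poly /qD_poly !hornerE /=; field. Qed.

Lemma q_disc_derivE z : (q_disc^`()).[z] =
  - (z * ((b^+2 - c^+2) * z^+2 + (b^+2 + c^+2 - 2 * a^+2))).
Proof. by rewrite /q_disc /qA_poly /qB_poly /qD_poly !derivE !hornerE /=; field. Qed.

(* The roots of [q_disc] are the branch points of the projection of the curve
   to the first factor; smoothness makes them simple. *)
Lemma q_disc_simple_root : exists z0, q_disc.[z0] = 0 /\ (q_disc^`()).[z0] != 0.
Proof.
case: smooth => hbc hab hac _ _.
set la := b^+2 - c^+2; set ka := b^+2 + c^+2 - 2 * a^+2.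
have kl : ka^+2 - la^+2 != 0.
  rewrite (_ : ka^+2 - la^+2 = 4 * ((a^+2 - c^+2) * (a^+2 - b^+2))); last by rewrite /ka /la; ring.
  by rewrite !mulf_neq0 ?four_neq0.
set s := sqrtC (ka^+2 - la^+2).
have hs : s ^+ 2 = ka^+2 - la^+2 by rewrite sqrtCK.
set om := (s - ka) / la; set z0 := sqrtC om.
have hz : z0 ^+ 2 = om by rewrite sqrtCK.
have e1 : la * om ^+ 2 + 2 * ka * om + la = 0.
  rewrite (_ : _ + la = (s ^+ 2 - (ka ^+ 2 - la ^+ 2)) / la); last by rewrite /om; field.
  by rewrite hs subrr mul0r.
have e2 : la * om + ka = s by rewrite /om; field.
exists z0; split.
  rewrite q_discE -/la -/ka (_ : z0 ^+ 4 = om ^+ 2); last by rewrite -hz -exprM.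
  by rewrite hz e1 oppr0 mul0r.
rewrite q_disc_derivE -/la -/ka hz e2 oppr_eq0 mulf_neq0 //.
  apply/eqP => z00; move: e2; rewrite -hz z00 expr0n /= mulr0 add0r => ka_s.
  have : la ^+ 2 = ka ^+ 2 - s ^+ 2 by rewrite hs; ring.
  by rewrite ka_s subrr => /eqP; rewrite sqrf_eq0 (negbTE hbc).
by apply: contraNneq kl => s0; rewrite -hs s0 expr0n.
Qed.

(* [qA r0^2 - qB r0 r1 + qD r1^2] is the norm of [r0 + r1 y] from the
   function field of the curve; since [q_disc] is not a square it vanishes
   only for [r0 = r1 = 0]. *)
Lemma q_norm_eq0 (r0 r1 : {poly C}) :
  qA_poly * r0 ^+ 2 - qB_poly * r0 * r1 + qD_poly * r1 ^+ 2 = 0 -> r0 = 0 /\ r1 = 0.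
Proof.
move=> hR.
have SQ : (qA_poly * r0 *+ 2 - qB_poly * r1) ^+ 2 = q_disc * r1 ^+ 2.
  rewrite (_ : _ ^+ 2 = q_disc * r1 ^+ 2
    + (qA_poly * (qA_poly * r0 ^+ 2 - qB_poly * r0 * r1 + qD_poly * r1 ^+ 2)) *+ 4).
    by rewrite hR mulr0 mul0rn addr0.
  by rewrite /q_disc; ring.
have [z0 [hz0 hz0']] := q_disc_simple_root.
have r10 := sqr_eq_mul_sqr_simple_root hz0 hz0' SQ.
split=> //; move: hR; rewrite r10 !(mulr0, expr0n) /= subr0 addr0 => /eqP.
by rewrite mulf_eq0 (negbTE qA_poly_neq0) sqrf_eq0 => /eqP.
Qed.

(* Irreducibility of the curve [q_poly2 = 0]; the hypothesis says that [g]
   vanishes at points of the curve above all but finitely many values of [x]. *)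
Lemma vanish_on_q_curve (g : {poly {poly C}}) :
  (forall P : {poly C}, P != 0 ->
     exists z1 z2, [/\ eval2 q_poly2 z1 z2 = 0, eval2 g z1 z2 = 0 & P.[z1] != 0]) ->
  forall z1 z2, eval2 q_poly2 z1 z2 = 0 -> eval2 g z1 z2 = 0.
Proof.
move=> hyp.
have := Pdiv.Idomain.divp_eq g q_poly2.
have := Pdiv.Idomain.ltn_modpN0 g q_poly2_neq0.
rewrite size_q_poly2 lead_coef_q_poly2.
move: (Pdiv.Idomain.scalp _ _) (Pdiv.Idomain.divp _ _) (Pdiv.Idomain.modp _ _) => k quo rem szr de.
set r0 := rem`_0; set r1 := rem`_1.
have erem : rem = r0%:P + r1%:P * 'X.
  apply/polyP => i; rewrite coefD coefC coefCM coefX.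
  case: i => [|[|i]] /=; rewrite ?mulr0 ?mulr1 ?addr0 ?add0r //.
  by rewrite nth_default // -ltnS (leq_trans szr).
have rem_on_curve z1 z2 : eval2 q_poly2 z1 z2 = 0 -> eval2 g z1 z2 = 0 ->
    r0.[z1] + r1.[z1] * z2 = 0.
  move=> hQ hg; have := congr1 (fun p => eval2 p z1 z2) de => /=.
  rewrite -mul_polyC eval2M eval2D eval2M eval2C hg hQ !mulr0 add0r erem.
  by rewrite !(eval2D, eval2M, eval2C, eval2X) => <-.
have [r00 r10] : r0 = 0 /\ r1 = 0.
  apply: q_norm_eq0; set N := _ + _.
  apply/eqP/negP => /negP /hyp [z1 [z2 [hQ hg hN]]].
  have e := rem_on_curve z1 z2 hQ hg; rewrite eval2_q_poly2 in hQ.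
  have eN : N.[z1] = r1.[z1] ^+ 2 * (qA_poly.[z1] * z2 ^+ 2 + qB_poly.[z1] * z2 + qD_poly.[z1])
    + (r0.[z1] + r1.[z1] * z2) * (qA_poly.[z1] * (r0.[z1] - r1.[z1] * z2) - qB_poly.[z1] * r1.[z1]).
    by rewrite /N !(hornerD, hornerN, hornerM, horner_exp); ring.
  by move: hN; rewrite eN hQ e !mulr0 mul0r addr0 eqxx.
move: de; rewrite erem r00 r10 mul0r addr0 addr0 => de.
have [quo' ->] : exists quo', g = quo' * q_poly2.
  apply: (cancel_scale _ _ de); first by rewrite expf_neq0 // qA_poly_neq0.
  move=> z; rewrite rootE horner_exp expf_eq0 => /andP [_ hz].
  by apply: q_poly2_fiber_neq0; rewrite rootE.
by move=> z1 z2 hQ; rewrite eval2M hQ mulr0.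
Qed.

End SmoothQuadric.

Lemma chart_pt v : w1 v = 0 -> w2 v = 0 -> t1 v != 0 -> t2 v != 0 ->
  v = tact (t1 v) (t2 v) (mk6 (s1 v / t1 v) 1 0 (s2 v / t2 v) 1 0).
Proof.
by move=> h1 h2 h3 h4; apply: pt_ext; rewrite !tactE !mk6E ?mulr1 ?mulr0 // mulrC divfK.
Qed.

Section SmoothCurve.
Variables a b c : C.
Hypothesis smooth : smooth_params a b c.

Lemma F1capF2_chart_zero v : F1capF2 a b c v -> t1 v != 0 -> t2 v != 0 ->
  eval2 (q_poly2 a b c) (s1 v / t1 v) (s2 v / t2 v) = 0.
Proof.
move=> [_ [hq [hw1 hw2]]] t10 t20.
rewrite -qf_dehomog; apply: (mulfI (mulf_neq0 (expf_neq0 2 t10) (expf_neq0 2 t20))).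
by rewrite mulr0 -qf_tact -chart_pt.
Qed.

Lemma F1capF2_fiber u p1 : F1capF2 a b c u -> ~ (p1.1 = 0 /\ p1.2 = 0) ->
  s1 u * p1.2 = t1 u * p1.1 ->
  exists2 p2, List.In p2 (quad_zeros (qA b c p1.1 p1.2) (a * p1.1 * p1.2) (qD b c p1.1 p1.2))
    & s2 u * p2.2 = t2 u * p2.1.
Proof.
move=> [hU [hq [hw1 hw2]]] hp1 e1.
have [st1 st2] := inU_ratios hU hw1 hw2.
have [m [m0 [es et]]] := cross_eq0_proportional st1 hp1 e1.
apply: quad_zerosP st2 _; first exact: qforms_no_common_zero.
apply: (mulfI (expf_neq0 2 m0)); rewrite mulr0 -hq qf_quadratic es et /qA /qD; ring.
Qed.

Lemma F1capF2_off_chart_finite (P : {poly C}) : P != 0 ->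
  finite_points (fun u => F1capF2 a b c u /\ ~ [/\ t1 u != 0, t2 u != 0 & P.[s1 u / t1 u] != 0]).
Proof.
move=> P0.
set L0 := quad_zeros ((b + c) / 4) 0 ((b - c) / 4).
set L1 := (1, 0) :: List.app (map (fun z => (z, 1)) (roots_seq P)) L0.
have L1_neq0 p : List.In p L1 -> ~ (p.1 = 0 /\ p.2 = 0).
  rewrite /L1 /= => -[<- /= [/eqP]|]; first by rewrite oner_eq0.
  move=> h; case: (List.in_app_or _ _ _ h) => {h}; last exact: quad_zeros_neq0.
  elim: (roots_seq P) => [|x s ih] //= [<- /= [_ /eqP]|]; first by rewrite oner_eq0.
  exact: ih.
pose L2 p1 := quad_zeros (qA b c p1.1 p1.2) (a * p1.1 * p1.2) (qD b c p1.1 p1.2).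
apply: (@finite_points_of_ratios _ L1 L2 L1_neq0 (fun p1 => @quad_zeros_neq0 _ _ _ _)).
move=> u [Fu off]; have Fu' := Fu; move: Fu' => [hU [hq [hw1 hw2]]].
have [st1 st2] := inU_ratios hU hw1 hw2.
split=> //; have [p1 ip1 hp1] : exists2 p, List.In p L1 & s1 u * p.2 = t1 u * p.1.
- have [t10|t10] := eqVneq (t1 u) 0.
    by exists (1, 0); [left | rewrite t10 /= mulr0 mul0r].
  have [t20|t20] := eqVneq (t2 u) 0.
    have s20 : s2 u != 0 by apply/eqP => s20; apply: st2.
    have nz : ~ ((b + c) / 4 = 0 /\ (0 : C) = 0 /\ (b - c) / 4 = 0).
      by case; move/eqP; rewrite (negbTE (quarter_neq0 (addr_params_neq0 smooth))).
    have hqA : (b + c) / 4 * s1 u ^+ 2 + 0 * s1 u * t1 u + (b - c) / 4 * t1 u ^+ 2 = 0.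
      move: hq; rewrite qf_quadratic t20 !mulr0 expr0n /= mulr0 !addr0 => /eqP.
      by rewrite mulf_eq0 sqrf_eq0 (negbTE s20) orbF /qA !mul0r addr0 => /eqP.
    have [p ip hp] := quad_zerosP nz st1 hqA.
    by exists p => //; right; apply: List.in_or_app; right.
  have Pz : root P (s1 u / t1 u).
    by apply: contraT => hP; case: off; split.
  exists (s1 u / t1 u, 1); last by rewrite /= mulr1 mulrC divfK.
  by right; apply: List.in_or_app; left; apply: In_map_mem; apply: roots_seqP.
- by exists p1; [split | apply: F1capF2_fiber => //; exact: L1_neq0].
Qed.

Lemma infinite_sub_F1capF2_off_roots Z : (forall v, Z v -> F1capF2 a b c v) ->
  ~ finite_points Z -> forall P : {poly C}, P != 0 ->
  exists u, Z u /\ [/\ t1 u != 0, t2 u != 0 & P.[s1 u / t1 u] != 0].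
Proof.
move=> hZ nf P P0; apply: NNPP => nH; apply: nf.
have [l hl] := F1capF2_off_chart_finite P0.
by exists l => v Zv; apply: hl; split; [exact: hZ | move=> h; apply: nH; exists v].
Qed.

(* Closed sets are cut out by polynomial-like functions; on the chart
   [t1 = t2 = 1] those become bivariate polynomials vanishing on the infinitely
   many points of [Z], hence on the whole curve by [vanish_on_q_curve]. *)
Lemma infinite_closed_sub_chart Z : infinite_closed_sub (F1capF2 a b c) Z ->
  forall v, F1capF2 a b c v -> t1 v != 0 -> t2 v != 0 -> Z v.
Proof.
move=> [[ht [S [hp hS]]] hZ nf] v Fv t10 t20.
apply/hS; split; first by case: Fv.
move=> f Sf.
set e := fun x y => tact (t1 v) (t2 v) (mk6 x 1 0 y 1 0).
have he i : is_poly2 (fun x y => e x y i).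
  by apply: is_poly2_mk6; apply: is_poly2M;
    by [exact: is_poly2_cst | exact: is_poly2_x | exact: is_poly2_y].
have [g hg] := hp f Sf e he.
have [hU [hq [hw1 hw2]]] := Fv.
rewrite (chart_pt hw1 hw2 t10 t20) -/(e _ _) hg.
apply: vanish_on_q_curve (F1capF2_chart_zero Fv t10 t20) => // P P0.
have [u [Zu [tu1 tu2 hP]]] := infinite_sub_F1capF2_off_roots hZ nf P0.
have [_ [_ [hu1 hu2]]] := hZ u Zu.
exists (s1 u / t1 u), (s2 u / t2 u); split=> //; first exact: F1capF2_chart_zero (hZ u Zu) tu1 tu2.
rewrite -hg; apply/(proj2 (proj1 (hS _) _)) => //.
have := congr1 (tact (t1 v / t1 u) (t2 v / t2 u)) (chart_pt hu1 hu2 tu1 tu2).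
rewrite tact_tact !divfK // /e => <-.
by apply: ht => //; apply: mulf_neq0; rewrite ?invr_eq0.
Qed.

End SmoothCurve.

Lemma infinite_closed_sub_chart1 a b c Z : smooth_params a b c ->
  infinite_closed_sub (F1capF2 a b c) Z ->
  forall v, F1capF2 a b c v -> t1 v != 0 -> Z v.
Proof.
move=> smooth hZ v Fv t10.
have [t20|t20] := eqVneq (t2 v) 0; last first.
  exact (infinite_closed_sub_chart smooth hZ Fv t10 t20).
have [[_ hU2] [_ [_ hw2]]] := Fv.
have s20 : s2 v != 0 by apply/eqP => s20; apply: hU2.
rewrite -(swap_st2K v).
apply: (infinite_closed_sub_chart (smooth_paramsN smooth) (infinite_closed_sub_swap_st2 hZ)) => //.
by apply/F1capF2_swap_st2; rewrite opprK.
Qed.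

Lemma infinite_closed_sub_F1capF2 a b c Z : smooth_params a b c ->
  infinite_closed_sub (F1capF2 a b c) Z -> forall v, F1capF2 a b c v -> Z v.
Proof.
move=> smooth hZ v Fv.
have [t10|t10] := eqVneq (t1 v) 0; last exact (infinite_closed_sub_chart1 smooth hZ Fv t10).
have [[hU1 _] [_ [hw1 _]]] := Fv.
have s10 : s1 v != 0 by apply/eqP => s10; apply: hU1.
rewrite -(swap_st1K v).
apply: (infinite_closed_sub_chart1 (smooth_paramsN smooth) (infinite_closed_sub_swap_st1 hZ)) => //.
by apply/F1capF2_swap_st1; rewrite opprK.
Qed.

Notation X_ i := ('X_(@Ordinal 6 i isT) : {mpoly C[6]}).

Definition q_mpoly (a b c : C) : {mpoly C[6]} :=
  a%:MP * X_ 0 * X_ 1 * X_ 3 * X_ 4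
  + ((b + c) / 4)%:MP * (X_ 0 * X_ 0 * X_ 3 * X_ 3 + X_ 1 * X_ 1 * X_ 4 * X_ 4)
  + ((b - c) / 4)%:MP * (X_ 0 * X_ 0 * X_ 4 * X_ 4 + X_ 1 * X_ 1 * X_ 3 * X_ 3).

Lemma meval_q_mpoly a b c v : mpoly.meval v (q_mpoly a b c) = qf a b c v.
Proof. by rewrite /q_mpoly !(mevalD, mevalM, mevalC, mevalXU) /qf /s1 /t1 /s2 /t2; ring. Qed.

Lemma F1capF2_closed a b c : wclosed (F1capF2 a b c).
Proof.
split; first by move=> v [].
split.
  move=> v m1 m2 h1 h2 [hu [hq [hw1 hw2]]]; split; first by apply/inU_tact.
  by rewrite qf_tact hq !tactE hw1 hw2 !mulr0.
exists (fun p => p = q_mpoly a b c \/ p = X_ 2 \/ p = X_ 5) => v; split.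
  by move=> [hu [hq [hw1 hw2]]]; split=> // p [->|[->|->]]; rewrite ?meval_q_mpoly ?mevalXU.
move=> [hu h]; split=> //; split; first by rewrite -meval_q_mpoly; apply: h; left.
by split; [ rewrite /w1 -(mevalXU v); apply: h; right; left
          | rewrite /w2 -(mevalXU v); apply: h; right; right].
Qed.

(* Above every [x = z] off the roots of [qA_poly] the quadratic equation in [y]
   has a solution, and infinitely many such [z] are available. *)
Lemma F1capF2_infinite a b c : smooth_params a b c -> ~ finite_points (F1capF2 a b c).
Proof.
move=> smooth [l hl].
have [k] := exists_natr_notin (map (fun u => s1 u / t1 u) l ++ roots_seq (qA_poly b c)).
set z : C := k.+1%:R; rewrite mem_cat negb_or => /andP [hk1 hk2].
have Az : (qA_poly b c).[z] != 0.
  by apply: contraNneq hk2 => h; apply: roots_seqP; [exact: qA_poly_neq0 smooth | exact/rootP].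
set A := (qA_poly b c).[z]; set B := (qB_poly a).[z]; set D := (qD_poly b c).[z].
set r := sqrtC (B ^+ 2 - 4 * A * D); set y := (- B + r) / (2 * A).
have hy : A * y ^+ 2 + B * y + D = 0.
  rewrite (_ : _ + D = (r ^+ 2 - (B ^+ 2 - 4 * A * D)) / (4 * A)); last by rewrite /y; field.
  by rewrite sqrtCK subrr mul0r.
have Fzy : F1capF2 a b c (mk6 z 1 0 y 1 0).
  split; first by split; rewrite !mk6E => -[_ [/eqP]]; rewrite oner_eq0.
  by split=> //; rewrite qf_dehomog eval2_q_poly2.
have [u [iu [m1 [m2 [_ [_ e]]]]]] := hl _ Fzy.
have e1 : 1 = m1 * t1 u by have := congr1 t1 e; rewrite tactE.
have e0 : z = m1 * s1 u by have := congr1 s1 e; rewrite tactE.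
have tu : t1 u != 0 by apply: contra_eq_neq e1 => ->; rewrite mulr0 oner_neq0.
have hm : m1 = (t1 u)^-1 by apply: (mulIf tu); rewrite mulVf // e1.
have zu : z = s1 u / t1 u by rewrite e0 hm mulrC.
by move/negP: hk1; apply; rewrite zu; exact: (mem_map_In (fun u => s1 u / t1 u) iu).
Qed.

Lemma F1capF2_proper a b c Z : smooth_params a b c -> wclosed Z ->
  Defs.subsetP Z (F1capF2 a b c) -> ~ Defs.subsetP (F1capF2 a b c) Z -> finite_points Z.
Proof.
move=> smooth wc sub nsub; apply: NNPP => nf; apply: nsub => v.
by apply: infinite_closed_sub_F1capF2 => //; split=> //; exact: wclosed_pclosed wc.
Qed.

Lemma F1capF2_curve a b c : smooth_params a b c -> irreducible_curve (F1capF2 a b c).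
Proof.
move=> smooth; have nf := F1capF2_infinite smooth.
split; last by split=> // Z'; apply: F1capF2_proper.
split; first exact: F1capF2_closed.
split.
  by apply: NNPP => ne; apply: nf; exists nil => v Fv; case: ne; exists v.
move=> Z1 Z2 wc1 wc2 e.
case: (classic (Defs.subsetP (F1capF2 a b c) Z1)) => [|n1]; first by left.
case: (classic (Defs.subsetP (F1capF2 a b c) Z2)) => [|n2]; first by right.
have f1 := F1capF2_proper smooth wc1 (fun v h => proj2 (e v) (or_introl h)) n1.
have f2 := F1capF2_proper smooth wc2 (fun v h => proj2 (e v) (or_intror h)) n2.
by case: nf; apply: (finite_points_union (fun v => proj1 (e v)) f1 f2).
Qed.

Lemma F1capF2_invariant_by g a b c :
  (forall v, w1 (g v) = 0 <-> w1 v = 0) -> (forall v, w2 (g v) = 0 <-> w2 v = 0) ->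
  (forall v, w1 v = 0 -> w2 v = 0 -> (inU (g v) <-> inU v)) ->
  (forall v, qf a b c (g v) = qf a b c v) ->
  forall v, F1capF2 a b c (g v) <-> F1capF2 a b c v.
Proof.
move=> e1 e2 eU eq v; rewrite /F1capF2 eq; split.
  by move=> [hU [hq [/e1 h1 /e2 h2]]]; split; first by apply/(eU v h1 h2).
by move=> [hU [hq [h1 h2]]]; rewrite e1 e2; split; first by apply/(eU v h1 h2).
Qed.

Lemma F1capF2_G_invariant a b c : G_invariant (F1capF2 a b c).
Proof.
have oppr_eq0P (x : C) : (- x = 0) <-> (x = 0).
  by split=> [/eqP|->]; rewrite ?oppr0 // oppr_eq0 => /eqP.
split; [|split; [|split]].
- apply: F1capF2_invariant_by => // v.
  + by rewrite /inU /tau1 !mk6E => h1 h2; rewrite h1 h2; intuition.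
  + by rewrite /qf /tau1 !mk6E; ring.
- apply: F1capF2_invariant_by => // v.
  + by rewrite /inU /tau2 !mk6E => h1 h2; intuition.
  + by rewrite /qf /tau2 !mk6E; ring.
- apply: F1capF2_invariant_by => // v.
  + by rewrite /inU /tau3 !mk6E !oppr_eq0P => h1 h2; intuition.
  + by rewrite /qf /tau3 !mk6E; ring.
- move=> l v l0; apply: F1capF2_invariant_by => {}v.
  + rewrite /sigma mk6E; split=> [/eqP|->]; last by rewrite mulr0.
    by rewrite mulf_eq0 (negbTE l0) => /eqP.
  + rewrite /sigma mk6E; split=> [/eqP|->]; last by rewrite mulr0.
    by rewrite mulf_eq0 invr_eq0 (negbTE l0) => /eqP.
  + by rewrite /inU /sigma !mk6E => h1 h2; rewrite h1 h2 !mulr0; intuition.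
  + by rewrite /qf /sigma !mk6E.
Qed.

(** * Invariant curves lie in F1 cap F2 *)

Lemma sigma_same_point_uniq v u l l' :
  ~ (s1 v = 0 /\ t1 v = 0) -> ~ (s2 v = 0 /\ t2 v = 0) -> ~ (w1 v = 0 /\ w2 v = 0) ->
  l != 0 -> same_point u (sigma l v) -> same_point u (sigma l' v) -> l = l'.
Proof.
move=> h1 h2 hw l0 [m1 [m2 [_ [_ e]]]] [n1 [n2 [_ [_ e']]]].
move: (congr1 s1 e) (congr1 t1 e) (congr1 w1 e) (congr1 s2 e) (congr1 t2 e) (congr1 w2 e).
move: (congr1 s1 e') (congr1 t1 e') (congr1 w1 e') (congr1 s2 e') (congr1 t2 e') (congr1 w2 e').
rewrite /sigma /tact !mk6E => b1 b2 b3 b4 b5 b6 a1 a2 a3 a4 a5 a6.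
have em1 := scale_uniq h1 a1 a2 b1 b2.
have em2 := scale_uniq h2 a4 a5 b4 b5.
have [w0|w0] := eqVneq (w1 v) 0; last by apply: (mulIf w0); rewrite a3 b3 em1.
have w20 : w2 v != 0 by apply/eqP => w20; apply: hw.
by apply: invr_inj; apply: (mulIf w20); rewrite a6 b6 em2.
Qed.

Lemma sigma_orbit_infinite v (Z : pt -> Prop) :
  ~ (s1 v = 0 /\ t1 v = 0) -> ~ (s2 v = 0 /\ t2 v = 0) -> ~ (w1 v = 0 /\ w2 v = 0) ->
  (forall l, l != 0 -> Z (sigma l v)) -> ~ finite_points Z.
Proof.
move=> h1 h2 hw hZ [pts hpts].
have [s hs] : exists s : seq C, forall l, l != 0 ->
    (exists u, List.In u pts /\ same_point u (sigma l v)) -> l \in s.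
  elim: pts {hpts} => [|u pts [s ih]]; first by exists [::] => l _ [u []].
  case: (classic (exists l, l != 0 /\ same_point u (sigma l v))) => [[l1 [l10 sp1]]|nl].
    exists (l1 :: s) => l l0 [u' [[<-|iu] sp]]; rewrite inE.
      by rewrite (sigma_same_point_uniq h1 h2 hw l10 sp1 sp) eqxx.
    by rewrite ih ?orbT //; exists u'.
  exists s => l l0 [u' [[<-|iu] sp]]; first by case: nl; exists l.
  by apply: ih => //; exists u'.
have [k hk] := exists_natr_notin s.
have k0 : k.+1%:R != 0 :> C by rewrite pnatr_eq0.
by move: hk; rewrite hs //; apply: hpts; apply: hZ.
Qed.

Lemma Xabc_ratios_neq0 a b c v : Xabc a b c v -> inU (tau1 v) ->
  ~ (s1 v = 0 /\ t1 v = 0) /\ ~ (s2 v = 0 /\ t2 v = 0).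
Proof.
move=> [[hU1 hU2] hX]; rewrite /inU /tau1 !mk6E => -[hT1 hT2].
have w0 (h : s1 v = 0 /\ t1 v = 0 \/ s2 v = 0 /\ t2 v = 0) : w1 v = 0 \/ w2 v = 0.
  have /eqP : w1 v * w2 v = 0 by rewrite hX /qf; case: h => -[-> ->]; ring.
  by rewrite mulf_eq0 => /orP [] /eqP; [left | right].
split=> -[x y].
  by case: (w0 (or_introl (conj x y))) => w; [apply: hU1 | apply: hT2].
by case: (w0 (or_intror (conj x y))) => w; [apply: hT1 | apply: hU2].
Qed.

Definition ratio1_mpoly (x y : C) : {mpoly C[6]} := X_ 0 * y%:MP - X_ 1 * x%:MP.
Definition ratio2_mpoly (x y : C) : {mpoly C[6]} := X_ 3 * y%:MP - X_ 4 * x%:MP.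

Lemma meval_ratio1_mpoly x y u : mpoly.meval u (ratio1_mpoly x y) = s1 u * y - t1 u * x.
Proof. by rewrite /ratio1_mpoly !(mevalB, mevalM, mevalXU, mevalC). Qed.
Lemma meval_ratio2_mpoly x y u : mpoly.meval u (ratio2_mpoly x y) = s2 u * y - t2 u * x.
Proof. by rewrite /ratio2_mpoly !(mevalB, mevalM, mevalXU, mevalC). Qed.

Lemma swap_negate_fixed_eq0 (s t : C) : t * t - s * s = 0 -> s * t - (- t) * s = 0 ->
  s = 0 /\ t = 0.
Proof.
move=> e2 e3.
have /eqP : s * t * 2 = 0 by rewrite -e3; ring.
rewrite mulf_eq0 (negbTE two_neq0) orbF mulf_eq0 => /orP [] /eqP h0.
  have /eqP : t * t = 0 by rewrite -e2 h0 mulr0 subr0.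
  by rewrite mulf_eq0 orbb => /eqP.
have /eqP : - (s * s) = 0 by rewrite -e2 h0 mulr0 sub0r.
by rewrite oppr_eq0 mulf_eq0 orbb => /eqP.
Qed.

Lemma invariant_curve_sub_F1capF2 a b c Z : irreducible_curve Z ->
  Defs.subsetP Z (Xabc a b c) -> G_invariant Z -> Defs.subsetP Z (F1capF2 a b c).
Proof.
move=> [[wcZ _] [_ proper]] sub [g1 [g2 [g3 g4]]] v Zv.
have [st1 st2] := Xabc_ratios_neq0 (sub v Zv) (proj1 (sub _ (proj2 (g1 v) Zv))).
have [hU hX] := sub v Zv.
case: (classic (w1 v = 0 /\ w2 v = 0)) => [[w10 w20]|nw].
  by split=> //; split=> //; rewrite -hX w10 mul0r.
exfalso.
pose fiber u := (Z u /\ mpoly.meval u (ratio1_mpoly (s1 v) (t1 v)) = 0)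
  /\ mpoly.meval u (ratio2_mpoly (s2 v) (t2 v)) = 0.
have fiberE u : fiber u <->
    [/\ Z u, s1 u * t1 v - t1 u * s1 v = 0 & s2 u * t2 v - t2 u * s2 v = 0].
  by rewrite /fiber meval_ratio1_mpoly meval_ratio2_mpoly; split=> [[[]]|[]].
have wc_fiber : wclosed fiber.
  apply: wclosed_setI_zero => [|u m1 m2]; last by exists m2; rewrite !meval_ratio2_mpoly !tactE; ring.
  apply: wclosed_setI_zero => // u m1 m2.
  by exists m1; rewrite !meval_ratio1_mpoly !tactE; ring.
have fiber_sub : Defs.subsetP fiber Z by move=> u /fiberE [].
have Z_not_sub : ~ Defs.subsetP Z fiber.
  move=> h; apply: st1; apply: swap_negate_fixed_eq0.
    by have /fiberE [_ + _] := h _ (proj2 (g2 v) Zv); rewrite /tau2 !mk6E.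
  by have /fiberE [_ + _] := h _ (proj2 (g3 v) Zv); rewrite /tau3 !mk6E.
apply: (sigma_orbit_infinite st1 st2 nw _ (proper _ wc_fiber fiber_sub Z_not_sub)) => l l0.
by apply/fiberE; split; [apply/(g4 l v l0) | rewrite /sigma !mk6E; ring..].
Qed.

(** * The singular case *)

(* The six zeros of [s t (s^4 - t^4)] in P^1. *)
Definition quartic_zeros : list (C * C) :=
  [:: (1, 0); (0, 1); (1, 1); (1, -1); ('i, 1); (- 'i, 1)].

Lemma quartic_zeros_neq0 p : List.In p quartic_zeros -> ~ (p.1 = 0 /\ p.2 = 0).
Proof.
by rewrite /quartic_zeros /= => -[<-|[<-|[<-|[<-|[<-|[<-|[]]]]]]] /= [x y];
  move: x y => /eqP; rewrite ?oner_eq0 // => _ /eqP; rewrite oner_eq0.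
Qed.

Lemma quartic_zerosP x y : x * y * (x ^+ 4 - y ^+ 4) = 0 ->
  exists2 p, List.In p quartic_zeros & x * p.2 = y * p.1.
Proof.
have -> : x ^+ 4 - y ^+ 4 = (x - y) * (x + y) * ((x - 'i * y) * (x + 'i * y)).
  have -> : (x - 'i * y) * (x + 'i * y) = x ^+ 2 - 'i ^+ 2 * y ^+ 2 by ring.
  by rewrite sqrCi; ring.
move=> /eqP; rewrite !mulf_eq0 => /orP [/orP[]|/orP[/orP[]|/orP[]]] /eqP h.
- by exists (0, 1); [right; left | rewrite h /=; ring].
- by exists (1, 0); [left | rewrite h /=; ring].
- exists (1, 1); first by do 2 right; left.
  by apply/eqP; rewrite -subr_eq0 /= !mulr1 h.
- exists (1, -1); first by do 3 right; left.
  by rewrite /= (_ : y = - x) ?mulrN1 ?mulr1 //; apply/eqP; rewrite -addr_eq0 addrC h.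
- exists ('i, 1); first by do 4 right; left.
  by rewrite /= (_ : x = 'i * y); [ring | apply/eqP; rewrite -subr_eq0 h].
- exists (- 'i, 1); first by do 5 right; left.
  by rewrite /= (_ : x = - ('i * y)); [ring | apply/eqP; rewrite -addr_eq0 h].
Qed.

Lemma invariant_curve_sum_sqr_zero a b c Z (P Q : {mpoly C[6]}) (be ga : C) (g : pt -> pt) :
  be != 0 -> ga != 0 ->
  (forall v, qf a b c v = be * mpoly.meval v P ^+ 2 + ga * mpoly.meval v Q ^+ 2) ->
  (forall v m1 m2, mpoly.meval (tact m1 m2 v) P = m1 * m2 * mpoly.meval v P) ->
  (forall v m1 m2, mpoly.meval (tact m1 m2 v) Q = m1 * m2 * mpoly.meval v Q) ->
  (forall v, mpoly.meval (g v) P = mpoly.meval v P) ->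
  (forall v, mpoly.meval (g v) Q = - mpoly.meval v Q) ->
  (forall v, Z (g v) <-> Z v) ->
  irreducible_closed Z -> Defs.subsetP Z (F1capF2 a b c) ->
  forall u, Z u -> mpoly.meval u P = 0 /\ mpoly.meval u Q = 0.
Proof.
move=> be0 ga0 hq hPt hQt hPg hQg hZg [wcZ [_ irr]] sub.
set k := sqrtC be; set m := sqrtC (- ga).
have hk : k ^+ 2 = be by rewrite sqrtCK.
have hm : m ^+ 2 = - ga by rewrite sqrtCK.
have k0 : k != 0 by apply: contraNneq be0 => h; rewrite -hk h expr0n.
have m0 : m != 0 by apply: contraNneq ga0 => h; rewrite -oppr_eq0 -hm h expr0n.
pose branch (e : C) : {mpoly C[6]} := k%:MP * P + (e * m)%:MP * Q.
have branchE e v : mpoly.meval v (branch e) = k * mpoly.meval v P + e * m * mpoly.meval v Q.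
  by rewrite /branch !(mevalD, mevalM, mevalC).
pose Zb e u := Z u /\ mpoly.meval u (branch e) = 0.
have wc_branch e : wclosed (Zb e).
  apply: wclosed_setI_zero => // u m1 m2; exists (m1 * m2).
  by rewrite !branchE hPt hQt; ring.
have cover u : Z u <-> Zb 1 u \/ Zb (-1) u.
  split; last by case=> -[].
  move=> Zu; have [_ [hq0 _]] := sub u Zu.
  have /eqP : mpoly.meval u (branch 1) * mpoly.meval u (branch (-1)) = 0.
    have ga_m : ga = - m ^+ 2 by rewrite hm opprK.
    by rewrite !branchE -hq0 hq -hk ga_m; ring.
  by rewrite mulf_eq0 => /orP [] /eqP h; [left | right].
have in_branch e : e ^+ 2 = 1 -> Defs.subsetP Z (Zb e) ->
    forall u, Z u -> mpoly.meval u P = 0 /\ mpoly.meval u Q = 0.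
  move=> he hs u Zu; have [_ e1] := hs u Zu; have [_ e2] := hs (g u) (proj2 (hZg u) Zu).
  move: e1 e2; rewrite !branchE hPg hQg => e1 e2.
  have /eqP a1 : (k * mpoly.meval u P) * 2 = 0 by rewrite -[RHS](addr0 0) -{1}e1 -e2; ring.
  have /eqP a2 : (e * m * mpoly.meval u Q) * 2 = 0 by rewrite -[RHS](subrr 0) -{1}e1 -e2; ring.
  have e0 : e != 0 by apply/eqP => e0; move: he; rewrite e0 expr0n => /eqP; rewrite eq_sym oner_eq0.
  move: a1 a2; rewrite !mulf_eq0 (negbTE k0) (negbTE two_neq0) (negbTE e0) (negbTE m0) /=.
  by rewrite !orbF => /eqP -> /eqP ->.
case: (irr (Zb 1) (Zb (-1)) (wc_branch 1) (wc_branch (-1)) cover) => hs.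
  by apply: (in_branch 1) => //; rewrite expr1n.
by apply: (in_branch (-1)) => //; rewrite sqrrN expr1n.
Qed.

Lemma invariant_curve_sum_sqr_false a b c Z (P Q : {mpoly C[6]}) (be ga : C) (g : pt -> pt) :
  be != 0 -> ga != 0 ->
  (forall v, qf a b c v = be * mpoly.meval v P ^+ 2 + ga * mpoly.meval v Q ^+ 2) ->
  (forall v m1 m2, mpoly.meval (tact m1 m2 v) P = m1 * m2 * mpoly.meval v P) ->
  (forall v m1 m2, mpoly.meval (tact m1 m2 v) Q = m1 * m2 * mpoly.meval v Q) ->
  (forall v, mpoly.meval (g v) P = mpoly.meval v P) ->
  (forall v, mpoly.meval (g v) Q = - mpoly.meval v Q) ->
  (forall v, Z (g v) <-> Z v) ->
  (forall v, inU v -> w1 v = 0 -> w2 v = 0 -> mpoly.meval v P = 0 -> mpoly.meval v Q = 0 ->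
     s1 v * t1 v * (s1 v ^+ 4 - t1 v ^+ 4) = 0 /\ s2 v * t2 v * (s2 v ^+ 4 - t2 v ^+ 4) = 0) ->
  irreducible_curve Z -> Defs.subsetP Z (F1capF2 a b c) -> False.
Proof.
move=> be0 ga0 hq hPt hQt hPg hQg hZg hpts [cZ [nf _]] sub.
have PQ0 := invariant_curve_sum_sqr_zero be0 ga0 hq hPt hQt hPg hQg hZg cZ sub.
apply: nf; apply: (finite_points_of_ratios (L2 := fun=> quartic_zeros) quartic_zeros_neq0)
  => [p1|v Zv]; first exact: quartic_zeros_neq0.
have [hu [_ [hw1 hw2]]] := sub v Zv.
have [hP hQ] := PQ0 v Zv.
have [h1 h2] := hpts v hu hw1 hw2 hP hQ.
have [p1 ip1 hp1] := quartic_zerosP h1.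
by split=> //; exists p1 => //; apply: quartic_zerosP.
Qed.

Definition bilinear_mpoly (p1 p2 p3 p4 : C) : {mpoly C[6]} :=
  p1%:MP * (X_ 0 * X_ 3) + p2%:MP * (X_ 1 * X_ 4) + p3%:MP * (X_ 0 * X_ 4) + p4%:MP * (X_ 1 * X_ 3).

Lemma meval_bilinear_mpoly p1 p2 p3 p4 v : mpoly.meval v (bilinear_mpoly p1 p2 p3 p4) =
  p1 * (s1 v * s2 v) + p2 * (t1 v * t2 v) + p3 * (s1 v * t2 v) + p4 * (t1 v * s2 v).
Proof. by rewrite /bilinear_mpoly !(mevalD, mevalM, mevalC, mevalXU). Qed.

Lemma meval_bilinear_mpoly_tact p1 p2 p3 p4 v m1 m2 :
  mpoly.meval (tact m1 m2 v) (bilinear_mpoly p1 p2 p3 p4)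
  = m1 * m2 * mpoly.meval v (bilinear_mpoly p1 p2 p3 p4).
Proof. by rewrite !meval_bilinear_mpoly !tactE; ring. Qed.

Lemma sqr_ratio_quartic (r s t : C) : r ^+ 2 = 1 -> s ^+ 2 = r * t ^+ 2 ->
  s * t * (s ^+ 4 - t ^+ 4) = 0.
Proof.
move=> hr hs; rewrite (_ : s ^+ 4 = (s ^+ 2) ^+ 2); last by ring.
by rewrite hs exprMn hr; ring.
Qed.

Definition special_params (a b c : C) := exists e1 e2 : C,
  (e1 = 1 \/ e1 = -1) /\ (e2 = 1 \/ e2 = -1) /\ b = e1 * a /\ c = e2 * a.

Lemma sign_sqr (p : C) : p = 1 \/ p = -1 -> p ^+ 2 = 1.
Proof. by case=> ->; rewrite ?sqrrN expr1n. Qed.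

Lemma quarter_eq0 (x : C) : x / 4 = 0 -> x = 0.
Proof. by move/eqP; rewrite mulf_eq0 invr_eq0 (negbTE four_neq0) orbF => /eqP. Qed.

(* For [a = p (b + c) / 2 + q (b - c) / 2] with signs [p], [q]:
   [qf = (b + c) / 4 (s1 s2 + p t1 t2)^2 + (b - c) / 4 (s1 t2 + q t1 s2)^2],
   and [tau3] negates the second form. *)
Lemma no_invariant_curve_tau3 a b c Z (p q : C) : ~ special_params a b c ->
  (p = 1 \/ p = -1) -> (q = 1 \/ q = -1) -> a = p * (b + c) / 2 + q * (b - c) / 2 ->
  ~ G_inv_curve_in_X a b c Z.
Proof.
move=> nsp hp hq ha [cZ [subX gZ]].
have [_ [_ [g3 _]]] := gZ.
have hp2 := sign_sqr hp; have hq2 := sign_sqr hq.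
apply: (@invariant_curve_sum_sqr_false a b c Z (bilinear_mpoly 1 p 0 0) (bilinear_mpoly 0 0 1 q)
  ((b + c) / 4) ((b - c) / 4) tau3 _ _ _ (@meval_bilinear_mpoly_tact _ _ _ _)
  (@meval_bilinear_mpoly_tact _ _ _ _) _ _ g3 _ cZ (invariant_curve_sub_F1capF2 cZ subX gZ)).
- apply/eqP => /quarter_eq0 bc; apply: nsp; exists q, (- q).
  have hc : c = - b by apply: (addrI b); rewrite bc subrr.
  split=> //; split; first by case: hq => ->; rewrite ?opprK; [right | left].
  by rewrite ha hc; split; case: hp => ->; case: hq => ->; field.
- apply/eqP => /quarter_eq0 bc; apply: nsp; exists p, p.
  have hc : c = b by apply/eqP; rewrite eq_sym -subr_eq0 bc.
  by do 2 (split=> //); rewrite ha hc; split; case: hp => ->; case: hq => ->; field.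
- by move=> v; rewrite !meval_bilinear_mpoly ha /qf; case: hp => ->; case: hq => ->; field.
- by move=> v; rewrite !meval_bilinear_mpoly /tau3 !mk6E; ring.
- by move=> v; rewrite !meval_bilinear_mpoly /tau3 !mk6E; ring.
move=> v hu hw1 hw2; rewrite !meval_bilinear_mpoly => hP hQ.
have [st1 st2] := inU_ratios hu hw1 hw2.
have pq2 : (p * q) ^+ 2 = 1 by rewrite exprMn hp2 hq2 mulr1.
split; apply: (sqr_ratio_quartic pq2); apply/eqP; rewrite -subr_eq0; apply/eqP.
  have eP : s1 v * s2 v + p * t1 v * t2 v = 0 by rewrite -hP; ring.
  have eQ : q * t1 v * s2 v + s1 v * t2 v = 0 by rewrite -hQ; ring.
  by rewrite expr2 (cross_eq_of_kernel st2 eP eQ); ring.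
have eP : s2 v * s1 v + p * t2 v * t1 v = 0 by rewrite -hP; ring.
have eQ : t2 v * s1 v + q * s2 v * t1 v = 0 by rewrite -hQ; ring.
have := cross_eq_of_kernel st1 eP eQ.
have -> : s2 v ^+ 2 - p * q * t2 v ^+ 2
  = q * (s2 v * (q * s2 v) - p * t2 v * t2 v) + (1 - q ^+ 2) * s2 v ^+ 2 by ring.
by move=> ->; rewrite hq2 subrr; ring.
Qed.

(* For [c = b] (resp. [c = - b]) we have
   [qf = (a + b) / 4 (X + Y)^2 + (b - a) / 4 (X - Y)^2] with [X = s1 s2], [Y = t1 t2]
   (resp. [X = s1 t2], [Y = t1 s2]), and [tau2] negates [X - Y]. *)
Lemma no_invariant_curve_tau2 a b c Z (d e : C) : ~ special_params a b c ->
  (d = 1 /\ e = 0) \/ (d = 0 /\ e = 1) -> c = (d - e) * b ->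
  ~ G_inv_curve_in_X a b c Z.
Proof.
move=> nsp hde hc [cZ [subX gZ]].
have [_ [g2 _]] := gZ.
apply: (@invariant_curve_sum_sqr_false a b c Z (bilinear_mpoly d d e e) (bilinear_mpoly d (- d) e (- e))
  ((a + b) / 4) ((b - a) / 4) tau2 _ _ _ (@meval_bilinear_mpoly_tact _ _ _ _)
  (@meval_bilinear_mpoly_tact _ _ _ _) _ _ g2 _ cZ (invariant_curve_sub_F1capF2 cZ subX gZ)).
- apply/eqP => /quarter_eq0 ab; apply: nsp; exists (-1), (- (d - e)); split; first by right.
  split; first by case: hde => -[-> ->]; rewrite ?subr0 ?sub0r ?opprK; [right | left].
  have hb : b = - a by apply: (addrI a); rewrite ab subrr.
  by rewrite hc hb; split; ring.
- apply/eqP => /quarter_eq0 ab; apply: nsp; exists 1, (d - e); split; first by left.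
  split; first by case: hde => -[-> ->]; rewrite ?subr0 ?sub0r; [left | right].
  have hb : b = a by apply/eqP; rewrite -subr_eq0 ab.
  by rewrite hc hb; split; ring.
- by move=> v; rewrite !meval_bilinear_mpoly hc /qf; case: hde => -[-> ->]; field.
- by move=> v; rewrite !meval_bilinear_mpoly /tau2 !mk6E; ring.
- by move=> v; rewrite !meval_bilinear_mpoly /tau2 !mk6E; ring.
move=> v hu hw1 hw2; rewrite !meval_bilinear_mpoly => hP hQ.
have [st1 st2] := inU_ratios hu hw1 hw2.
have eX : d * (s1 v * s2 v) + e * (s1 v * t2 v) = 0.
  apply: (mulIf two_neq0); rewrite mul0r -[RHS](addr0 0) -{1}hP -hQ; ring.
have eY : d * (t1 v * t2 v) + e * (t1 v * s2 v) = 0.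
  apply: (mulIf two_neq0); rewrite mul0r -[RHS](subr0 0) -{1}hP -hQ; ring.
suff [-> ->] : s1 v * t1 v = 0 /\ s2 v * t2 v = 0 by rewrite !mul0r.
case: hde => -[hd he]; rewrite hd he !(mul1r, mul0r, addr0, add0r) in eX eY.
- have k1 : s1 v * s2 v + 0 * t2 v = 0 by rewrite mul0r addr0.
  have k2 : 0 * s2 v + t1 v * t2 v = 0 by rewrite mul0r add0r.
  have k3 : s2 v * s1 v + 0 * t1 v = 0 by rewrite mul0r addr0 mulrC.
  have k4 : 0 * s1 v + t2 v * t1 v = 0 by rewrite mul0r add0r mulrC.
  by rewrite (cross_eq_of_kernel st2 k1 k2) (cross_eq_of_kernel st1 k3 k4) !mul0r.
- have k1 : 0 * s2 v + s1 v * t2 v = 0 by rewrite mul0r add0r.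
  have k2 : t1 v * s2 v + 0 * t2 v = 0 by rewrite mul0r addr0.
  have k3 : 0 * s1 v + s2 v * t1 v = 0 by rewrite mul0r add0r mulrC.
  have k4 : t2 v * s1 v + 0 * t1 v = 0 by rewrite mul0r addr0 mulrC.
  by rewrite -(cross_eq_of_kernel st2 k1 k2) -(cross_eq_of_kernel st1 k3 k4) !mul0r.
Qed.

Lemma smooth_invariant_curve a b c : smooth_params a b c ->
  forall Z, G_inv_curve_in_X a b c Z <-> (forall v, Z v <-> F1capF2 a b c v).
Proof.
move=> smooth Z; split.
  move=> [cZ [subX gZ]].
  have sub := invariant_curve_sub_F1capF2 cZ subX gZ.
  have [[wcZ _] [nf _]] := cZ.
  move=> v; split; first exact: sub.
  by apply: infinite_closed_sub_F1capF2 => //; split=> //; exact: wclosed_pclosed.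
move=> eZ; have -> : Z = F1capF2 a b c.
  by apply: functional_extensionality => v; apply: propositional_extensionality.
split; first exact: F1capF2_curve.
split; last exact: F1capF2_G_invariant.
by move=> v [hu [hq [hw1 _]]]; split=> //; rewrite hw1 mul0r hq.
Qed.

Lemma singular_no_invariant_curve a b c : ~ special_params a b c ->
  (a ^+ 2 - b ^+ 2) * (a ^+ 2 - c ^+ 2) * (b ^+ 2 - c ^+ 2) = 0 ->
  forall Z, ~ G_inv_curve_in_X a b c Z.
Proof.
move=> nsp /eqP; rewrite !mulf_eq0 !subr_eq0 !eqf_sqr => h Z.
case/orP: h => [/orP [] /orP [] /eqP h | /orP [] /eqP h].
- by apply: (@no_invariant_curve_tau3 a b c Z 1 1 nsp); [left | left | rewrite h; field].
- by apply: (@no_invariant_curve_tau3 a b c Z (-1) (-1) nsp); [right | right | rewrite h; field].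
- by apply: (@no_invariant_curve_tau3 a b c Z 1 (-1) nsp); [left | right | rewrite h; field].
- by apply: (@no_invariant_curve_tau3 a b c Z (-1) 1 nsp); [right | left | rewrite h; field].
- by apply: (@no_invariant_curve_tau2 a b c Z 1 0 nsp); [left | rewrite h subr0 mul1r].
- by apply: (@no_invariant_curve_tau2 a b c Z 0 1 nsp); [right | rewrite h sub0r mulN1r opprK].
Qed.

Theorem mainTheorem17 (a b c : C) :
  ~ (a = 0 /\ b = 0 /\ c = 0) ->
  ~ (exists e1 e2 : C, (e1 = 1 \/ e1 = -1) /\ (e2 = 1 \/ e2 = -1) /\
                       b = e1 * a /\ c = e2 * a) ->
  ~ (b = 0 /\ c = 0) -> ~ (a = 0 /\ c = 0) -> ~ (a = 0 /\ b = 0) ->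
  ((a ^+ 2 - b ^+ 2) * (a ^+ 2 - c ^+ 2) * (b ^+ 2 - c ^+ 2) != 0 ->
     forall Z : pt -> Prop,
       G_inv_curve_in_X a b c Z <-> (forall v, Z v <-> F1capF2 a b c v)) /\
  ((a ^+ 2 - b ^+ 2) * (a ^+ 2 - c ^+ 2) * (b ^+ 2 - c ^+ 2) = 0 ->
     forall Z : pt -> Prop, ~ G_inv_curve_in_X a b c Z).
Proof.
move=> _ nsp _ nac nab; split; last exact: singular_no_invariant_curve.
rewrite !mulf_eq0 !negb_or => /andP [/andP [hab hac] hbc].
by apply: smooth_invariant_curve; split.
Qed.
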